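(* Let $T$ be an arbitrary triangle and let $\Gamma_{h,T}$ be an arbitrary open line segment with endpoints on $\partial T$ dividing $T$ into two nonempty open parts $T_h^+$ and $T_h^-$; let $\mathbf{n}_h$ be the unit normal of $\Gamma_{h,T}$ pointing into $T_h^+$. Let $w(\mathbf{x})=\operatorname{dist}(\mathbf{x},\Gamma_{h,T})$ for $\mathbf{x}\in T_h^+$ and $w(\mathbf{x})=0$ for $\mathbf{x}\in T_h^-$. Then $$0\le \nabla\pi^{CR}_{h,T}w\cdot\mathbf{n}_h\le 1.$$
   Context: $\pi^{CR}_{h,T}w$ is the unique linear polynomial on $T$ with $\int_{e_i}\pi^{CR}_{h,T}w=\int_{e_i}w$ for the three edges $e_i$ of $T$ (so $\nabla\pi^{CR}_{h,T}w$ is a constant vector). *)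

From Stdlib Require Import Reals Lra.
From Coquelicot Require Import Coquelicot.
Open Scope R_scope.

Definition pt := (R * R)%type.

Definition padd (x y : pt) : pt := (fst x + fst y, snd x + snd y).
Definition psub (x y : pt) : pt := (fst x - fst y, snd x - snd y).
Definition pscal (t : R) (x : pt) : pt := (t * fst x, t * snd x).
Definition dot (x y : pt) : R := fst x * fst y + snd x * snd y.
Definition pnorm (x : pt) : R := sqrt (dot x x).
Definition cross (x y : pt) : R := fst x * snd y - snd x * fst y.

Definition nondegenerate (a b c : pt) : Prop := cross (psub b a) (psub c a) <> 0.

Definition bary (a b c : pt) (l1 l2 l3 : R) (x : pt) : Prop :=
  l1 + l2 + l3 = 1 /\
  x = padd (pscal l1 a) (padd (pscal l2 b) (pscal l3 c)).

Definition in_tri (a b c x : pt) : Prop :=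
  exists l1 l2 l3, 0 < l1 /\ 0 < l2 /\ 0 < l3 /\ bary a b c l1 l2 l3 x.

Definition in_cl_tri (a b c x : pt) : Prop :=
  exists l1 l2 l3, 0 <= l1 /\ 0 <= l2 /\ 0 <= l3 /\ bary a b c l1 l2 l3 x.

Definition on_bdry (a b c x : pt) : Prop := in_cl_tri a b c x /\ ~ in_tri a b c x.

Definition in_open_seg (p q x : pt) : Prop :=
  exists t, 0 < t < 1 /\ x = padd p (pscal t (psub q p)).

Definition dist_seg (p q x : pt) : R :=
  real (Glb_Rbar (fun r => exists y, in_open_seg p q y /\ r = pnorm (psub x y))).

Definition edge_int (f : pt -> R) (u v : pt) : R :=
  pnorm (psub v u) * RInt (fun t => f (padd u (pscal t (psub v u)))) 0 1.

Definition is_CR_interp (a b c : pt) (w : pt -> R) (g : pt) (c0 : R) : Prop :=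
  let P := fun x => dot g x + c0 in
  edge_int P a b = edge_int w a b /\
  edge_int P b c = edge_int w b c /\
  edge_int P c a = edge_int w c a.

(* This is the
   continuous extension to the closed triangle used to take edge traces. *)
Definition w_fun (p q n : pt) (x : pt) : R :=
  if Rlt_dec 0 (dot (psub x p) n) then dist_seg p q x else 0.

(* Only the edge averages of w enter the interpolant, and for the affine
   interpolant P x = g.x + c0 they are the values of P at the edge midpoints.
   Order the vertices X, Y, Z by their position along Gamma; the line through Y
   in the direction n then meets XZ at D = X + lam (Z - X) = Y + dl n, dl <> 0.
   Splitting XZ at D, the combination
     lam (avg_XD - avg_XY) + (1 - lam) (avg_ZD - avg_ZY)
   of edge averages equals dl (g.n) / 2 for P.  For w, each difference compares
   w at x and at x + s dl n with 0 <= s <= 1.  On the closed triangle w is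
   nondecreasing in the direction n and 1-Lipschitz (a segment from T^+ to T^-
   crosses the line of Gamma inside the closed segment Gamma), so each
   dl (avg_XD - avg_XY), dl (avg_ZD - avg_ZY) lies in [0, dl^2 / 2], whence
   0 <= dl^2 (g.n) / 2 <= dl^2 / 2. *)

From Stdlib Require Import Reals Lra.
From Coquelicot Require Import Coquelicot.
Open Scope R_scope.

(** * Plane vectors *)

Ltac coords := unfold padd, psub, pscal, dot, cross in *; simpl in *.

Lemma dot_self_nonneg x : 0 <= dot x x.
Proof. coords; nra. Qed.

Lemma pnorm_nonneg x : 0 <= pnorm x.
Proof. apply sqrt_pos. Qed.

Lemma pnorm_sq x : pnorm x * pnorm x = dot x x.
Proof. apply sqrt_sqrt, dot_self_nonneg. Qed.

Lemma pnorm_unit n : dot n n = 1 -> pnorm n = 1.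
Proof. intros h; unfold pnorm; rewrite h; apply sqrt_1. Qed.

Lemma pnorm_scal t v : pnorm (pscal t v) = Rabs t * pnorm v.
Proof.
  unfold pnorm. replace (dot (pscal t v) (pscal t v)) with (Rsqr t * dot v v)
    by (coords; unfold Rsqr; ring).
  rewrite sqrt_mult_alt, sqrt_Rsqr_abs by apply Rle_0_sqr. reflexivity.
Qed.

Lemma pnorm_psubC x y : pnorm (psub x y) = pnorm (psub y x).
Proof. unfold pnorm; f_equal; coords; ring. Qed.

Lemma pnorm_psub_eq0 u v : pnorm (psub v u) = 0 -> u = v.
Proof.
  unfold pnorm; intros h. apply sqrt_eq_0 in h; [|apply dot_self_nonneg].
  destruct u as [u1 u2], v as [v1 v2]; coords.
  destruct (Rplus_sqr_eq_0 (v1 - u1) (v2 - u2)) as [h1 h2]; [unfold Rsqr; lra|].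
  f_equal; lra.
Qed.

Lemma dot_le_pnorm u v : dot u v <= pnorm u * pnorm v.
Proof.
  destruct (Rle_dec (dot u v) 0) as [h|h].
  { pose proof (Rmult_le_pos _ _ (pnorm_nonneg u) (pnorm_nonneg v)); lra. }
  rewrite <- (sqrt_Rsqr (dot u v)) by lra.
  unfold pnorm. rewrite <- sqrt_mult_alt by apply dot_self_nonneg.
  apply sqrt_le_1_alt. destruct u as [u1 u2], v as [v1 v2]; unfold Rsqr; coords.
  pose proof (Rle_0_sqr (u1 * v2 - u2 * v1)); unfold Rsqr in *; nra.
Qed.

Lemma pnorm_triangle x y z : pnorm (psub x z) <= pnorm (psub x y) + pnorm (psub y z).
Proof.
  pose proof (dot_le_pnorm (psub x y) (psub y z)).
  pose proof (pnorm_sq (psub x y)); pose proof (pnorm_sq (psub y z)).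
  pose proof (pnorm_nonneg (psub x y)); pose proof (pnorm_nonneg (psub y z)).
  assert (E : dot (psub x z) (psub x z)
    = dot (psub x y) (psub x y) + 2 * dot (psub x y) (psub y z) + dot (psub y z) (psub y z))
    by (coords; ring).
  unfold pnorm at 1. rewrite <- (sqrt_Rsqr (pnorm (psub x y) + pnorm (psub y z))) by lra.
  apply sqrt_le_1_alt. unfold Rsqr. nra.
Qed.

Lemma cross_eq0_of_common_perp u v w :
  w <> (0, 0) -> dot u w = 0 -> dot v w = 0 -> cross u v = 0.
Proof.
  intros hw hu hv. destruct u as [u1 u2], v as [v1 v2], w as [w1 w2]; coords.
  assert (e1 : (u1 * v2 - u2 * v1) * w1 = v2 * (u1 * w1 + u2 * w2) - u2 * (v1 * w1 + v2 * w2))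
    by ring.
  assert (e2 : (u1 * v2 - u2 * v1) * w2 = u1 * (v1 * w1 + v2 * w2) - v1 * (u1 * w1 + u2 * w2))
    by ring.
  rewrite hu, hv in e1, e2.
  destruct (Req_dec w1 0) as [h1|h1]; [destruct (Req_dec w2 0) as [h2|h2]|].
  - subst; contradiction.
  - apply (Rmult_eq_reg_r w2); lra.
  - apply (Rmult_eq_reg_r w1); lra.
Qed.

Lemma collinear_decomp u v : v <> (0, 0) -> cross u v = 0 -> u = pscal (dot u v / dot v v) v.
Proof.
  intros hv huv. destruct u as [u1 u2], v as [v1 v2].
  assert (hvv : v1 * v1 + v2 * v2 <> 0).
  { intro E. apply hv. f_equal; nra. }
  coords. assert (h : u1 * v2 = u2 * v1) by lra.
  apply injective_projections; simpl; field_simplify_eq; auto.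
  - replace (u1 * v2 ^ 2) with (u1 * v2 * v2) by ring. rewrite h; ring.
  - replace (u1 * v1 * v2) with (u1 * v2 * v1) by ring. rewrite h; ring.
Qed.

Lemma psub_neq0 u v : u <> v -> psub v u <> (0, 0).
Proof.
  intros huv E. apply huv.
  apply injective_projections; [apply (f_equal fst) in E|apply (f_equal snd) in E]; coords; lra.
Qed.

Lemma unit_neq0 n : dot n n = 1 -> n <> (0, 0).
Proof. intros hn E. rewrite E in hn. coords. lra. Qed.

(** * Affine functions and barycentric coordinates *)

Definition convex (K : pt -> Prop) :=
  forall x y t, K x -> K y -> 0 <= t <= 1 -> K (padd x (pscal t (psub y x))).

Definition affine (l : pt -> R) := exists (al : pt) (be : R), forall x, l x = dot al x + be.

Lemma affine_comb l x y t :
  affine l -> l (padd x (pscal t (psub y x))) = (1 - t) * l x + t * l y.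
Proof. intros (al & be & hl). rewrite !hl. coords; ring. Qed.

Lemma affine_vanishing_on_line l u v n :
  affine l -> u <> v -> n <> (0, 0) -> dot n (psub v u) = 0 -> l u = 0 -> l v = 0 ->
  exists k, forall x, l x = k * dot (psub x u) n.
Proof.
  intros (al & be & hl) huv hn hnv hu hv.
  assert (hal : al = pscal (dot al n / dot n n) n).
  { apply collinear_decomp; [exact hn|].
    apply (cross_eq0_of_common_perp _ _ (psub v u)); [apply psub_neq0, huv| |].
    - rewrite hl in hu, hv. coords; lra.
    - coords; lra. }
  exists (dot al n / dot n n). intros x.
  rewrite hl in hu |- *. rewrite hal at 1. rewrite hal in hu. coords; lra.
Qed.

Lemma affine_pos_between l u v n xp xm t :
  affine l -> u <> v -> dot n (psub v u) = 0 ->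
  0 <= l u -> 0 <= l v -> 0 < l xp -> 0 < l xm ->
  0 < dot (psub xp u) n -> dot (psub xm u) n < 0 -> 0 < t < 1 ->
  0 < l (padd u (pscal t (psub v u))).
Proof.
  intros hl huv hnv hu hv hxp hxm hp hm ht.
  destruct (Rlt_le_dec 0 (l (padd u (pscal t (psub v u))))) as [h|h]; [exact h|exfalso].
  rewrite affine_comb in h by exact hl.
  assert (hu0 : l u = 0) by nra. assert (hv0 : l v = 0) by nra.
  assert (hn : n <> (0, 0)) by (intro E; subst n; coords; lra).
  destruct (affine_vanishing_on_line l u v n hl huv hn hnv hu0 hv0) as [k hk].
  rewrite hk in hxp, hxm. nra.
Qed.

Section Barycentric.

Variables a b c : pt.
Hypothesis tri_nondeg : nondegenerate a b c.

Definition bary2 (x : pt) := cross (psub x a) (psub c a) / cross (psub b a) (psub c a).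
Definition bary3 (x : pt) := cross (psub b a) (psub x a) / cross (psub b a) (psub c a).
Definition bary1 (x : pt) := 1 - bary2 x - bary3 x.

Lemma bary_unique l1 l2 l3 x :
  bary a b c l1 l2 l3 x -> bary1 x = l1 /\ bary2 x = l2 /\ bary3 x = l3.
Proof.
  intros [hs ->]. unfold nondegenerate, bary1, bary2, bary3 in *.
  replace l1 with (1 - l2 - l3) by lra.
  coords. split; [|split]; field; auto.
Qed.

Lemma bary_coords x : bary a b c (bary1 x) (bary2 x) (bary3 x) x.
Proof.
  unfold nondegenerate, bary, bary1, bary2, bary3 in *.
  split; [ring|]. coords. apply injective_projections; simpl; field; auto.
Qed.

Lemma in_cl_tri_iff x : in_cl_tri a b c x <-> 0 <= bary1 x /\ 0 <= bary2 x /\ 0 <= bary3 x.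
Proof.
  split.
  - intros (l1 & l2 & l3 & h1 & h2 & h3 & hb).
    destruct (bary_unique _ _ _ _ hb) as (-> & -> & ->). auto.
  - intros (h1 & h2 & h3). exists (bary1 x), (bary2 x), (bary3 x). auto using bary_coords.
Qed.

Lemma in_tri_iff x : in_tri a b c x <-> 0 < bary1 x /\ 0 < bary2 x /\ 0 < bary3 x.
Proof.
  split.
  - intros (l1 & l2 & l3 & h1 & h2 & h3 & hb).
    destruct (bary_unique _ _ _ _ hb) as (-> & -> & ->). auto.
  - intros (h1 & h2 & h3). exists (bary1 x), (bary2 x), (bary3 x). auto using bary_coords.
Qed.

Lemma affine_bary : affine bary1 /\ affine bary2 /\ affine bary3.
Proof.
  unfold nondegenerate in tri_nondeg.
  set (D := cross (psub b a) (psub c a)) in *.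
  set (al2 := (snd (psub c a) / D, - fst (psub c a) / D)).
  set (al3 := (- snd (psub b a) / D, fst (psub b a) / D)).
  assert (h2 : forall x, bary2 x = dot al2 x - dot al2 a)
    by (intros x; unfold bary2, al2, D in *; coords; field; auto).
  assert (h3 : forall x, bary3 x = dot al3 x - dot al3 a)
    by (intros x; unfold bary3, al3, D in *; coords; field; auto).
  split; [|split].
  - exists (pscal (-1) (padd al2 al3)), (1 + dot al2 a + dot al3 a). intros x.
    unfold bary1. rewrite h2, h3. coords; ring.
  - exists al2, (- dot al2 a). exact h2.
  - exists al3, (- dot al3 a). exact h3.
Qed.

Lemma in_cl_tri_convex : convex (in_cl_tri a b c).
Proof.
  intros x y t. rewrite !in_cl_tri_iff. intros hx hy ht.
  destruct affine_bary as (A1 & A2 & A3). rewrite !affine_comb by assumption.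
  repeat split; nra.
Qed.

Lemma in_tri_between u v n xp xm t :
  in_cl_tri a b c u -> in_cl_tri a b c v -> u <> v -> dot n (psub v u) = 0 ->
  in_tri a b c xp -> in_tri a b c xm -> 0 < dot (psub xp u) n -> dot (psub xm u) n < 0 ->
  0 < t < 1 -> in_tri a b c (padd u (pscal t (psub v u))).
Proof.
  rewrite !in_cl_tri_iff, !in_tri_iff. intros hu hv huv hnv hxp hxm hp hm ht.
  destruct affine_bary as (A1 & A2 & A3).
  repeat split; eapply affine_pos_between; eauto; tauto.
Qed.

End Barycentric.

(** * Distance to the cut *)

Lemma dist_seg_is_glb p q x :
  (forall y, in_open_seg p q y -> dist_seg p q x <= pnorm (psub x y)) /\
  (forall m, (forall y, in_open_seg p q y -> m <= pnorm (psub x y)) -> m <= dist_seg p q x).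
Proof.
  unfold dist_seg.
  set (S := fun r => exists y, in_open_seg p q y /\ r = pnorm (psub x y)).
  destruct (Glb_Rbar_correct S) as [hlb hglb].
  assert (hS : S (pnorm (psub x (padd p (pscal (1/2) (psub q p)))))).
  { eexists; split; [exists (1/2); split; [lra|reflexivity]|reflexivity]. }
  assert (h0 : Rbar_le 0 (Glb_Rbar S)).
  { apply hglb. intros r [y [_ ->]]. apply pnorm_nonneg. }
  pose proof (hlb _ hS) as h1.
  destruct (Glb_Rbar S) as [glb| |]; simpl in h0, h1 |- *; try contradiction.
  split.
  - intros y hy. apply (hlb (pnorm (psub x y))). exists y; auto.
  - intros m hm. apply (hglb (Finite m)). intros r [y [hy ->]]. apply hm, hy.
Qed.

Lemma dist_seg_le p q x y : in_open_seg p q y -> dist_seg p q x <= pnorm (psub x y).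
Proof. apply dist_seg_is_glb. Qed.

Lemma dist_seg_ge p q x m :
  (forall y, in_open_seg p q y -> m <= pnorm (psub x y)) -> m <= dist_seg p q x.
Proof. apply dist_seg_is_glb. Qed.

Lemma dist_seg_nonneg p q x : 0 <= dist_seg p q x.
Proof. apply dist_seg_ge. intros; apply pnorm_nonneg. Qed.

Lemma dist_seg_lipschitz p q x x' : dist_seg p q x' <= dist_seg p q x + pnorm (psub x' x).
Proof.
  cut (dist_seg p q x' - pnorm (psub x' x) <= dist_seg p q x); [lra|].
  apply dist_seg_ge. intros y hy.
  pose proof (dist_seg_le p q x' y hy). pose proof (pnorm_triangle x' x y). lra.
Qed.

Lemma dist_seg_le_closed p q x t :
  0 <= t <= 1 -> dist_seg p q x <= pnorm (psub x (padd p (pscal t (psub q p)))).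
Proof.
  intros ht. apply Rle_plus_epsilon. intros eps heps.
  set (N := pnorm (psub q p)). assert (hN : 0 <= N) by apply pnorm_nonneg.
  set (s := Rmin 1 (eps / (N + 1))).
  assert (hs : 0 < s <= 1).
  { split; [apply Rmin_glb_lt; [lra|apply Rdiv_lt_0_compat; lra]|apply Rmin_l]. }
  assert (hsN : s * N < eps).
  { apply Rle_lt_trans with (eps / (N + 1) * N); [apply Rmult_le_compat_r, Rmin_r; exact hN|].
    apply Rmult_lt_reg_r with (N + 1); [lra|]. field_simplify; nra. }
  (* [t'] lies between [t] and [1/2], hence in the open interval. *)
  set (t' := t + s * (1/2 - t)).
  pose proof (dist_seg_le p q x (padd p (pscal t' (psub q p)))
    ltac:(exists t'; split; [unfold t'; nra|reflexivity])) as hle.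
  pose proof (pnorm_triangle x (padd p (pscal t (psub q p))) (padd p (pscal t' (psub q p))))
    as htri.
  replace (psub (padd p (pscal t (psub q p))) (padd p (pscal t' (psub q p))))
    with (pscal (t - t') (psub q p)) in htri by (coords; apply injective_projections; simpl; ring).
  rewrite pnorm_scal in htri. fold N in htri.
  assert (Rabs (t - t') <= s) by (unfold t'; apply Rabs_le; nra).
  nra.
Qed.

Lemma dist_seg_mono_normal p q n x e :
  dot n (psub q p) = 0 -> 0 < dot (psub x p) n -> 0 <= e ->
  dist_seg p q x <= dist_seg p q (padd x (pscal e n)).
Proof.
  intros hnq hx he. apply dist_seg_ge. intros y hy.
  apply Rle_trans with (pnorm (psub x y)); [apply dist_seg_le, hy|].
  destruct hy as [t [_ ->]]. apply sqrt_le_1_alt.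
  set (z := psub x (padd p (pscal t (psub q p)))).
  assert (hz : dot z n = dot (psub x p) n - t * dot n (psub q p)) by (unfold z; coords; ring).
  rewrite hnq, Rmult_0_r, Rminus_0_r in hz.
  replace (psub (padd x (pscal e n)) (padd p (pscal t (psub q p)))) with (padd z (pscal e n))
    by (unfold z; coords; apply injective_projections; simpl; ring).
  replace (dot (padd z (pscal e n)) (padd z (pscal e n)))
    with (dot z z + 2 * e * dot z n + e * e * dot n n) by (coords; ring).
  pose proof (dot_self_nonneg n). nra.
Qed.

Definition lipschitz_on (K : pt -> Prop) (f : pt -> R) (L : R) :=
  forall x y, K x -> K y -> Rabs (f x - f y) <= L * pnorm (psub x y).

Lemma w_fun_nonneg p q n x : 0 <= w_fun p q n x.
Proof. unfold w_fun; destruct Rlt_dec; [apply dist_seg_nonneg|lra]. Qed.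

Lemma w_fun_mono_normal p q n x e :
  dot n (psub q p) = 0 -> 0 <= e -> w_fun p q n x <= w_fun p q n (padd x (pscal e n)).
Proof.
  intros hnq he. unfold w_fun at 1.
  destruct (Rlt_dec 0 (dot (psub x p) n)) as [hx|hx]; [|apply w_fun_nonneg].
  unfold w_fun. destruct (Rlt_dec 0 (dot (psub (padd x (pscal e n)) p) n)) as [_|hxe].
  - apply dist_seg_mono_normal; assumption.
  - exfalso. apply hxe. pose proof (dot_self_nonneg n).
    replace (dot (psub (padd x (pscal e n)) p) n) with (dot (psub x p) n + e * dot n n)
      by (coords; ring).
    nra.
Qed.

Lemma Rinv_in_unit_interval s : 1 < s -> 0 < / s < 1.
Proof.
  intros hs. split; [apply Rinv_0_lt_compat; lra|].
  rewrite <- Rinv_1. apply Rinv_1_lt_contravar; lra.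
Qed.

Section CutTriangle.

Variables a b c p q n : pt.
Hypothesis tri_nondeg : nondegenerate a b c.
Hypothesis p_bdry : on_bdry a b c p.
Hypothesis q_bdry : on_bdry a b c q.
Hypothesis p_ne_q : p <> q.
Hypothesis n_unit : dot n n = 1.
Hypothesis n_perp : dot n (psub q p) = 0.
Hypothesis plus_side : exists x, in_tri a b c x /\ 0 < dot (psub x p) n.
Hypothesis minus_side : exists x, in_tri a b c x /\ dot (psub x p) n < 0.

Lemma cut_line_not_bdry u z t :
  in_cl_tri a b c u -> in_cl_tri a b c z -> u <> z ->
  dot (psub u p) n = 0 -> dot (psub z p) n = 0 -> 0 < t < 1 ->
  ~ on_bdry a b c (padd u (pscal t (psub z u))).
Proof.
  intros hu hz huz hun hzn ht [_ hnot]. apply hnot.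
  destruct plus_side as [xp [hxp hp]], minus_side as [xm [hxm hm]].
  apply (in_tri_between a b c tri_nondeg u z n xp xm); auto; coords; lra.
Qed.

Lemma cut_line_in_seg z :
  in_cl_tri a b c z -> dot (psub z p) n = 0 ->
  exists t, 0 <= t <= 1 /\ z = padd p (pscal t (psub q p)).
Proof.
  intros hz hzn.
  set (t := dot (psub z p) (psub q p) / dot (psub q p) (psub q p)).
  assert (hzt : z = padd p (pscal t (psub q p))).
  { assert (hcol : psub z p = pscal t (psub q p)).
    { apply collinear_decomp; [apply psub_neq0, p_ne_q|].
      apply (cross_eq0_of_common_perp _ _ n); [apply unit_neq0, n_unit|exact hzn|coords; lra]. }
    apply injective_projections;
      [apply (f_equal fst) in hcol|apply (f_equal snd) in hcol]; coords; lra. }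
  exists t. split; [|exact hzt].
  assert (hp : in_cl_tri a b c p) by apply p_bdry.
  assert (hq : in_cl_tri a b c q) by apply q_bdry.
  clearbody t. split; apply Rnot_lt_le; intro ht.
  - assert (hpe : p = padd q (pscal (/ (1 - t)) (psub z q))).
    { rewrite hzt. coords. apply injective_projections; simpl; field; lra. }
    apply (cut_line_not_bdry q z (/ (1 - t))); auto.
    + intro E. apply p_ne_q. rewrite hpe, <- E. coords. apply injective_projections; simpl; ring.
    + coords; lra.
    + apply Rinv_in_unit_interval; lra.
    + rewrite <- hpe. exact p_bdry.
  - assert (hqe : q = padd p (pscal (/ t) (psub z p))).
    { rewrite hzt. coords. apply injective_projections; simpl; field; lra. }
    apply (cut_line_not_bdry p z (/ t)); auto.
    + intro E. apply p_ne_q. rewrite hqe, <- E. coords. apply injective_projections; simpl; ring.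
    + coords; lra.
    + apply Rinv_in_unit_interval; lra.
    + rewrite <- hqe. exact q_bdry.
Qed.

Lemma dist_seg_le_across x y :
  in_cl_tri a b c x -> in_cl_tri a b c y ->
  0 < dot (psub x p) n -> dot (psub y p) n <= 0 -> dist_seg p q x <= pnorm (psub x y).
Proof.
  intros hx hy hxn hyn.
  set (th := dot (psub x p) n / (dot (psub x p) n - dot (psub y p) n)).
  assert (hth : 0 <= th <= 1).
  { unfold th. split; [apply Rlt_le, Rdiv_lt_0_compat; lra|].
    apply Rmult_le_reg_r with (dot (psub x p) n - dot (psub y p) n); [lra|].
    field_simplify; lra. }
  set (z := padd x (pscal th (psub y x))).
  assert (hzn : dot (psub z p) n = 0).
  { replace (dot (psub z p) n)
      with (dot (psub x p) n + th * (dot (psub y p) n - dot (psub x p) n))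
      by (unfold z; coords; ring).
    unfold th; field; lra. }
  destruct (cut_line_in_seg z) as [t [ht hzt]];
    [apply in_cl_tri_convex; auto | exact hzn |].
  apply Rle_trans with (pnorm (psub x z)); [rewrite hzt; apply dist_seg_le_closed, ht|].
  replace (psub x z) with (pscal (- th) (psub y x))
    by (unfold z; coords; apply injective_projections; simpl; ring).
  rewrite pnorm_scal, Rabs_Ropp, Rabs_pos_eq, pnorm_psubC by lra.
  pose proof (pnorm_nonneg (psub x y)). nra.
Qed.

Lemma w_fun_lipschitz : lipschitz_on (in_cl_tri a b c) (w_fun p q n) 1.
Proof.
  intros x y hx hy. rewrite Rmult_1_l. unfold w_fun.
  destruct (Rlt_dec 0 (dot (psub x p) n)) as [h1|h1];
  destruct (Rlt_dec 0 (dot (psub y p) n)) as [h2|h2].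
  - pose proof (dist_seg_lipschitz p q x y). pose proof (dist_seg_lipschitz p q y x).
    rewrite (pnorm_psubC y x) in *. apply Rabs_le. lra.
  - rewrite Rminus_0_r, Rabs_pos_eq by apply dist_seg_nonneg.
    apply dist_seg_le_across; auto; lra.
  - rewrite Rminus_0_l, Rabs_Ropp, Rabs_pos_eq, pnorm_psubC by apply dist_seg_nonneg.
    apply dist_seg_le_across; auto; lra.
  - rewrite Rminus_0_r, Rabs_R0. apply pnorm_nonneg.
Qed.

End CutTriangle.

(** * Averages along edges *)

(* [edge_int f u v] is [pnorm (psub v u) * edge_avg f u v] by conversion. *)
Definition edge_avg (f : pt -> R) (u v : pt) :=
  RInt (fun t => f (padd u (pscal t (psub v u)))) 0 1.

Lemma continuous_of_lipschitz (G : R -> R) L z :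
  0 <= L -> (forall s t, Rabs (G t - G s) <= L * Rabs (t - s)) -> continuous G z.
Proof.
  intros hL hG. apply continuity_pt_filterlim. intros eps heps.
  exists (eps / (L + 1)). split; [apply Rdiv_lt_0_compat; lra|].
  intros x [_ hx]. simpl in *. unfold R_dist in *.
  apply Rle_lt_trans with (L * (eps / (L + 1))).
  - eapply Rle_trans; [apply hG|]. apply Rmult_le_compat_l; lra.
  - apply Rmult_lt_reg_r with (L + 1); [lra|]. field_simplify; lra.
Qed.

(* [ex_RInt_continuous] asks for continuity at the endpoints as a function on
   all of [R]; clamping the parameter keeps the edge inside [K]. *)
Definition clamp01 t := Rmax 0 (Rmin 1 t).

Lemma clamp01_range t : 0 <= clamp01 t <= 1.
Proof. unfold clamp01, Rmax, Rmin; repeat destruct Rle_dec; lra. Qed.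

Lemma clamp01_id t : 0 <= t <= 1 -> clamp01 t = t.
Proof. intros; unfold clamp01, Rmax, Rmin; repeat destruct Rle_dec; lra. Qed.

Lemma clamp01_lipschitz s t : Rabs (clamp01 t - clamp01 s) <= Rabs (t - s).
Proof.
  unfold clamp01, Rmax, Rmin, Rabs. repeat destruct Rle_dec; repeat destruct Rcase_abs; lra.
Qed.

Lemma ex_RInt_edge_of_lipschitz K (f : pt -> R) L u v :
  convex K -> lipschitz_on K f L -> 0 <= L -> K u -> K v ->
  ex_RInt (fun t => f (padd u (pscal t (psub v u)))) 0 1.
Proof.
  intros hK hf hL hu hv.
  apply ex_RInt_ext with (fun t => f (padd u (pscal (clamp01 t) (psub v u)))).
  { intros t ht. rewrite Rmin_left, Rmax_right in ht by lra.
    rewrite clamp01_id by lra. reflexivity. }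
  apply (@ex_RInt_continuous R_CompleteNormedModule). intros z _.
  apply continuous_of_lipschitz with (L * pnorm (psub v u));
    [apply Rmult_le_pos; [exact hL|apply pnorm_nonneg]|].
  intros s t.
  eapply Rle_trans; [apply hf; apply hK; auto; apply clamp01_range|].
  replace (psub (padd u (pscal (clamp01 t) (psub v u))) (padd u (pscal (clamp01 s) (psub v u))))
    with (pscal (clamp01 t - clamp01 s) (psub v u))
    by (coords; apply injective_projections; simpl; ring).
  rewrite pnorm_scal, Rmult_assoc, (Rmult_comm (Rabs _)).
  apply Rmult_le_compat_l; [exact hL|].
  apply Rmult_le_compat_l; [apply pnorm_nonneg|apply clamp01_lipschitz].
Qed.

Lemma is_RInt_affine al be : is_RInt (fun t => al * t + be) 0 1 (al / 2 + be).
Proof.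
  set (F := fun t => al * t * t / 2 + be * t).
  replace (al / 2 + be) with (minus (F 1) (F 0)) by (unfold F, minus, plus, opp; simpl; field).
  apply (@is_RInt_derive R_CompleteNormedModule).
  - intros t _. unfold F. auto_derive; [exact I|field].
  - intros t _. apply (@ex_derive_continuous R_AbsRing R_NormedModule). auto_derive. exact I.
Qed.

Lemma edge_avg_affine g c0 u v :
  edge_avg (fun x => dot g x + c0) u v = dot g (padd u v) / 2 + c0.
Proof.
  unfold edge_avg.
  rewrite (RInt_ext _ (fun t => dot g (psub v u) * t + (dot g u + c0)))
    by (intros; coords; ring).
  rewrite (is_RInt_unique _ _ _ _ (is_RInt_affine _ _)). coords; field.
Qed.

Lemma RInt_comp_lin_01 (F : R -> R) al be :
  ex_RInt F be (al + be) -> al * RInt (fun t => F (al * t + be)) 0 1 = RInt F be (al + be).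
Proof.
  intros hF.
  assert (hF' : ex_RInt F (al * 0 + be) (al * 1 + be))
    by (rewrite Rmult_0_r, Rmult_1_r, Rplus_0_l; exact hF).
  destruct (Req_dec al 0) as [->|hal].
  { rewrite Rmult_0_l, Rplus_0_l, RInt_point. reflexivity. }
  assert (hex : ex_RInt (fun t => F (al * t + be)) 0 1).
  { apply ex_RInt_ext with (fun t => scal (/ al) (scal al (F (al * t + be)))).
    { intros t _. unfold scal; simpl; unfold mult; simpl. field. exact hal. }
    apply (@ex_RInt_scal R_NormedModule), (ex_RInt_comp_lin F al be 0 1 hF'). }
  transitivity (RInt (fun t => scal al (F (al * t + be))) 0 1).
  - rewrite (RInt_scal _ _ _ _ hex). reflexivity.
  - etransitivity; [exact (@RInt_comp_lin R_CompleteNormedModule F al be 0 1 hF')|].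
    f_equal; ring.
Qed.

Lemma edge_avg_rev (f : pt -> R) u v :
  ex_RInt (fun t => f (padd u (pscal t (psub v u)))) 0 1 -> edge_avg f v u = edge_avg f u v.
Proof.
  intros hF. set (F := fun t => f (padd u (pscal t (psub v u)))) in hF.
  unfold edge_avg. fold F.
  rewrite (RInt_ext _ (fun t => F (-1 * t + 1)))
    by (intros; unfold F; f_equal; coords; apply injective_projections; simpl; ring).
  assert (hF' : ex_RInt F 1 (-1 + 1))
    by (replace (-1 + 1) with 0 by ring; apply ex_RInt_swap, hF).
  pose proof (RInt_comp_lin_01 F (-1) 1 hF') as h. replace (-1 + 1) with 0 in h by ring.
  rewrite <- (opp_RInt_swap F 0 1 hF) in h. unfold opp in h; simpl in h. lra.
Qed.

Lemma edge_avg_split (f : pt -> R) u v lam :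
  0 <= lam <= 1 -> ex_RInt (fun t => f (padd u (pscal t (psub v u)))) 0 1 ->
  edge_avg f u v = lam * edge_avg f u (padd u (pscal lam (psub v u)))
    + (1 - lam) * edge_avg f (padd u (pscal lam (psub v u))) v.
Proof.
  intros hlam hF. set (d := padd u (pscal lam (psub v u))).
  set (F := fun t => f (padd u (pscal t (psub v u)))) in hF.
  assert (h1 : lam * edge_avg f u d = RInt F 0 lam).
  { unfold edge_avg. rewrite (RInt_ext _ (fun t => F (lam * t + 0)))
      by (intros; unfold F, d; f_equal; coords; apply injective_projections; simpl; ring).
    rewrite RInt_comp_lin_01, Rplus_0_r; [reflexivity|].
    rewrite Rplus_0_r. apply (@ex_RInt_Chasles_1 R_CompleteNormedModule) with 1; [lra|exact hF]. }
  assert (h2 : (1 - lam) * edge_avg f d v = RInt F lam 1).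
  { unfold edge_avg. rewrite (RInt_ext _ (fun t => F ((1 - lam) * t + lam)))
      by (intros; unfold F, d; f_equal; coords; apply injective_projections; simpl; ring).
    replace 1 with (1 - lam + lam) at 3 by ring.
    apply RInt_comp_lin_01. replace (1 - lam + lam) with 1 by ring.
    apply (@ex_RInt_Chasles_2 R_CompleteNormedModule) with 0; [lra|exact hF]. }
  rewrite h1, h2. symmetry. apply (RInt_Chasles F).
  - apply (@ex_RInt_Chasles_1 R_CompleteNormedModule) with 1; [lra|exact hF].
  - apply (@ex_RInt_Chasles_2 R_CompleteNormedModule) with 0; [lra|exact hF].
Qed.

Lemma RInt_scal_minus (A B : R -> R) k a b :
  ex_RInt A a b -> ex_RInt B a b ->
  RInt (fun t => k * (A t - B t)) a b = k * (RInt A a b - RInt B a b).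
Proof.
  intros hA hB.
  rewrite (RInt_ext _ (fun t => scal k (minus (A t) (B t)))) by reflexivity.
  rewrite (RInt_scal (V := R_CompleteNormedModule))
    by exact (ex_RInt_minus (V := R_NormedModule) _ _ _ _ hA hB).
  rewrite (RInt_minus (V := R_CompleteNormedModule)) by assumption.
  reflexivity.
Qed.

Lemma ex_RInt_scal_minus (A B : R -> R) k a b :
  ex_RInt A a b -> ex_RInt B a b -> ex_RInt (fun t => k * (A t - B t)) a b.
Proof.
  intros hA hB. apply (ex_RInt_scal (V := R_NormedModule) (fun t => minus (A t) (B t))).
  apply (ex_RInt_minus (V := R_NormedModule)); assumption.
Qed.

(** * The slope bound *)

Definition same_edge_avgs (f h : pt -> R) (X Y Z : pt) :=
  edge_avg f X Y = edge_avg h X Y /\ edge_avg f Y Z = edge_avg h Y Z /\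
  edge_avg f Z X = edge_avg h Z X.

Lemma same_edge_avgs_rotate f h X Y Z :
  same_edge_avgs f h X Y Z -> same_edge_avgs f h Y Z X.
Proof. unfold same_edge_avgs; tauto. Qed.

Lemma nondegenerate_rotate X Y Z : nondegenerate X Y Z -> nondegenerate Y Z X.
Proof. unfold nondegenerate; coords; intros h E; apply h; lra. Qed.

Lemma between_as_comb x y z :
  x <= y <= z \/ z <= y <= x -> exists lam, 0 <= lam <= 1 /\ y = x + lam * (z - x).
Proof.
  assert (up : forall x y z, x <= y <= z -> exists lam, 0 <= lam <= 1 /\ y = x + lam * (z - x)).
  { clear. intros x y z h. destruct (Req_dec z x) as [e|hzx].
    - exists 0. split; lra.
    - exists ((y - x) / (z - x)). split; [split|field; lra].
      + apply Rdiv_le_0_compat; lra.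
      + apply Rmult_le_reg_r with (z - x); [lra|].
        unfold Rdiv. rewrite Rmult_assoc, Rinv_l; lra. }
  intros [h|h]; [exact (up _ _ _ h)|].
  destruct (up z y x h) as [lam [hlam ->]]. exists (1 - lam). split; [lra|ring].
Qed.

Lemma median_of_three x y z :
  exists lam, 0 <= lam <= 1 /\
    (y = x + lam * (z - x) \/ z = y + lam * (x - y) \/ x = z + lam * (y - z)).
Proof.
  assert (h : (x <= y <= z \/ z <= y <= x) \/ (y <= z <= x \/ x <= z <= y) \/
              (z <= x <= y \/ y <= x <= z))
    by (destruct (Rle_dec x y), (Rle_dec y z), (Rle_dec z x); intuition lra).
  destruct h as [h|[h|h]]; destruct (between_as_comb _ _ _ h) as [lam [hlam e]];
    exists lam; tauto.
Qed.

Lemma normal_through_middle X Y Z n lam :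
  dot n n = 1 -> nondegenerate X Y Z ->
  cross n Y = cross n X + lam * (cross n Z - cross n X) ->
  exists dl, dl <> 0 /\ padd X (pscal lam (psub Z X)) = padd Y (pscal dl n).
Proof.
  intros hnn hT hmid. set (d := padd X (pscal lam (psub Z X))).
  assert (hdY : psub d Y = pscal (dot (psub d Y) n) n).
  { rewrite <- (Rdiv_1 (dot _ n)), <- hnn.
    apply collinear_decomp; [apply unit_neq0, hnn|]. unfold d; coords; lra. }
  assert (hd : d = padd Y (pscal (dot (psub d Y) n) n)).
  { apply injective_projections;
      [apply (f_equal fst) in hdY|apply (f_equal snd) in hdY]; coords; lra. }
  exists (dot (psub d Y) n). split; [|exact hd].
  intro E. apply hT. rewrite E in hd.
  replace Y with d by (rewrite hd; coords; apply injective_projections; simpl; ring).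
  unfold d; coords; ring.
Qed.

Section NormalSlope.

Variables (K : pt -> Prop) (f : pt -> R) (n : pt).
Hypothesis K_convex : convex K.
Hypothesis f_lipschitz : lipschitz_on K f 1.
Hypothesis f_mono_normal :
  forall x e, K x -> K (padd x (pscal e n)) -> 0 <= e -> f x <= f (padd x (pscal e n)).
Hypothesis n_unit : dot n n = 1.

Lemma ex_RInt_edge u v : K u -> K v -> ex_RInt (fun t => f (padd u (pscal t (psub v u)))) 0 1.
Proof. intros; apply (ex_RInt_edge_of_lipschitz K f 1); auto; lra. Qed.

Lemma normal_increment_bounds x e :
  K x -> K (padd x (pscal e n)) -> 0 <= e * (f (padd x (pscal e n)) - f x) <= e * e.
Proof.
  intros hx hxe.
  assert (hlip : Rabs (f (padd x (pscal e n)) - f x) <= Rabs e).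
  { pose proof (f_lipschitz _ _ hxe hx) as h.
    replace (psub (padd x (pscal e n)) x) with (pscal e n) in h
      by (coords; apply injective_projections; simpl; ring).
    rewrite Rmult_1_l, pnorm_scal, pnorm_unit, Rmult_1_r in h by exact n_unit. exact h. }
  apply Rabs_le_between in hlip. split.
  - destruct (Rle_dec 0 e) as [he|he].
    + pose proof (f_mono_normal x e hx hxe he). nra.
    + assert (hx' : x = padd (padd x (pscal e n)) (pscal (- e) n))
        by (coords; apply injective_projections; simpl; ring).
      pose proof (f_mono_normal _ (- e) hxe ltac:(rewrite <- hx'; exact hx) ltac:(lra)) as h.
      rewrite <- hx' in h. nra.
  - unfold Rabs in hlip. destruct Rcase_abs; nra.
Qed.

Lemma edge_avg_shift_bounds u v dl :
  K u -> K v -> K (padd v (pscal dl n)) ->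
  0 <= dl * (edge_avg f u (padd v (pscal dl n)) - edge_avg f u v) <= dl * dl / 2.
Proof.
  intros hu hv hv'. set (v' := padd v (pscal dl n)) in *.
  set (E := fun t => padd u (pscal t (psub v u))).
  set (E' := fun t => padd u (pscal t (psub v' u))).
  assert (hE' : forall t, E' t = padd (E t) (pscal (t * dl) n))
    by (intros; unfold E, E', v'; coords; apply injective_projections; simpl; ring).
  assert (hpt : forall t, 0 < t < 1 -> 0 <= dl * (f (E' t) - f (E t)) <= dl * dl * t + 0).
  { intros t ht. rewrite hE'.
    destruct (normal_increment_bounds (E t) (t * dl)) as [h1 h2];
      [apply K_convex; auto; lra|rewrite <- hE'; apply K_convex; auto; lra|].
    split; apply Rmult_le_reg_l with t; nra. }
  assert (hint : ex_RInt (fun t => dl * (f (E' t) - f (E t))) 0 1)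
    by (apply ex_RInt_scal_minus; apply ex_RInt_edge; assumption).
  unfold edge_avg.
  change (fun t => f (padd u (pscal t (psub v' u)))) with (fun t => f (E' t)).
  change (fun t => f (padd u (pscal t (psub v u)))) with (fun t => f (E t)).
  rewrite <- RInt_scal_minus by (apply ex_RInt_edge; assumption).
  split.
  - replace 0 with (0 / 2 + 0) at 1 by field.
    rewrite <- (is_RInt_unique _ _ _ _ (is_RInt_affine 0 0)).
    apply RInt_le; [lra|eexists; apply is_RInt_affine|exact hint|].
    intros t ht. specialize (hpt t ht). lra.
  - replace (dl * dl / 2) with (dl * dl / 2 + 0) by ring.
    rewrite <- (is_RInt_unique _ _ _ _ (is_RInt_affine (dl * dl) 0)).
    apply RInt_le; [lra|exact hint|eexists; apply is_RInt_affine|].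
    intros t ht. apply hpt, ht.
Qed.

Lemma slope_bounds_of_middle X Y Z g c0 lam :
  K X -> K Y -> K Z -> nondegenerate X Y Z -> 0 <= lam <= 1 ->
  cross n Y = cross n X + lam * (cross n Z - cross n X) ->
  same_edge_avgs f (fun x => dot g x + c0) X Y Z -> 0 <= dot g n <= 1.
Proof.
  intros hX hY hZ hT hlam hmid (eXY & eYZ & eZX).
  rewrite !edge_avg_affine in eXY, eYZ, eZX.
  destruct (normal_through_middle X Y Z n lam n_unit hT hmid) as [dl [hdl hd]].
  set (d := padd X (pscal lam (psub Z X))) in hd.
  assert (hKd : K d) by (apply K_convex; auto).
  pose proof (edge_avg_split f X Z lam hlam (ex_RInt_edge X Z hX hZ)) as hsplit.
  fold d in hsplit.
  rewrite (edge_avg_rev f Z d) in hsplit by (apply ex_RInt_edge; auto).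
  rewrite (edge_avg_rev f X Z) in eZX by (apply ex_RInt_edge; auto).
  rewrite (edge_avg_rev f Z Y) in eYZ by (apply ex_RInt_edge; auto).
  pose proof (edge_avg_shift_bounds X Y dl hX hY ltac:(rewrite <- hd; exact hKd)) as b1.
  pose proof (edge_avg_shift_bounds Z Y dl hZ hY ltac:(rewrite <- hd; exact hKd)) as b2.
  rewrite <- hd in b1, b2.
  assert (hgd : dot g d = dot g Y + dl * dot g n) by (rewrite hd; coords; ring).
  (* For the affine interpolant the combination is [dl * g.(d - Y) / 2]. *)
  assert (hsum : lam * (dl * (edge_avg f X d - edge_avg f X Y))
      + (1 - lam) * (dl * (edge_avg f Z d - edge_avg f Z Y)) = dl * dl * dot g n / 2).
  { assert (hgd' : dot g d = (1 - lam) * dot g X + lam * dot g Z) by (unfold d; coords; ring).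
    assert (hadd : forall u v, dot g (padd u v) = dot g u + dot g v) by (intros; coords; ring).
    rewrite !hadd in eXY, eYZ, eZX.
    replace (dl * dl * dot g n / 2) with (dl * (dot g Y + dl * dot g n - dot g Y) / 2) by field.
    rewrite <- hgd, hgd'.
    replace (lam * (dl * (edge_avg f X d - edge_avg f X Y))
      + (1 - lam) * (dl * (edge_avg f Z d - edge_avg f Z Y)))
      with (dl * (edge_avg f X Z - lam * edge_avg f X Y - (1 - lam) * edge_avg f Z Y))
      by (rewrite hsplit; ring).
    rewrite eXY, eYZ, eZX. field. }
  assert (hdl2 : 0 < dl * dl) by (apply Rsqr_pos_lt, hdl).
  split; nra.
Qed.

Lemma slope_bounds X Y Z g c0 :
  K X -> K Y -> K Z -> nondegenerate X Y Z ->
  same_edge_avgs f (fun x => dot g x + c0) X Y Z -> 0 <= dot g n <= 1.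
Proof.
  intros hX hY hZ hT hE.
  destruct (median_of_three (cross n X) (cross n Y) (cross n Z)) as [lam [hlam [h|[h|h]]]].
  - exact (slope_bounds_of_middle X Y Z g c0 lam hX hY hZ hT hlam h hE).
  - apply (slope_bounds_of_middle Y Z X g c0 lam);
      auto using nondegenerate_rotate, same_edge_avgs_rotate.
  - apply (slope_bounds_of_middle Z X Y g c0 lam);
      auto using nondegenerate_rotate, same_edge_avgs_rotate.
Qed.

End NormalSlope.

Lemma in_cl_tri_vertices a b c :
  in_cl_tri a b c a /\ in_cl_tri a b c b /\ in_cl_tri a b c c.
Proof.
  split; [|split]; [exists 1, 0, 0|exists 0, 1, 0|exists 0, 0, 1];
    repeat split; try lra; coords; apply injective_projections; simpl; ring.
Qed.

Lemma nondegenerate_neq a b c : nondegenerate a b c -> a <> b /\ b <> c /\ c <> a.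
Proof. unfold nondegenerate; intros hT; repeat split; intros ->; apply hT; coords; ring. Qed.

Lemma edge_avg_eq_of_edge_int_eq f h u v :
  u <> v -> edge_int f u v = edge_int h u v -> edge_avg f u v = edge_avg h u v.
Proof.
  intros huv E. apply Rmult_eq_reg_l with (pnorm (psub v u)); [exact E|].
  intros E0. apply huv, pnorm_psub_eq0, E0.
Qed.

Theorem lemma4p3 (a b c p q n : pt)
  (hT : nondegenerate a b c)
  (hp : on_bdry a b c p) (hq : on_bdry a b c q) (hpq : p <> q)
  (hn_unit : pnorm n = 1) (hn_perp : dot n (psub q p) = 0)
  (hplus : exists x, in_tri a b c x /\ 0 < dot (psub x p) n)
  (hminus : exists x, in_tri a b c x /\ dot (psub x p) n < 0)
  (g : pt) (c0 : R)
  (hCR : is_CR_interp a b c (w_fun p q n) g c0) :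
  0 <= dot g n <= 1.
Proof.
  assert (hnn : dot n n = 1) by (rewrite <- pnorm_sq, hn_unit; ring).
  destruct (in_cl_tri_vertices a b c) as (ha & hb & hc).
  destruct (nondegenerate_neq a b c hT) as (hab & hbc & hca).
  apply (slope_bounds (in_cl_tri a b c) (w_fun p q n) n) with a b c c0; auto.
  - apply in_cl_tri_convex, hT.
  - exact (w_fun_lipschitz a b c p q n hT hp hq hpq hnn hn_perp hplus hminus).
  - intros x e _ _ he. apply w_fun_mono_normal; assumption.
  - destruct hCR as (h1 & h2 & h3).
    split; [|split]; apply edge_avg_eq_of_edge_int_eq; auto.
Qed.
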